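(* Let $n,g,k$ be integers with $k\ge1$ and $2\leq g\leq \left\lfloor \frac{n-k-2}{2}\right\rfloor$, and suppose $(n-k)g$ is odd. Let $a,b$ be integers with $a$ even, $b$ odd, $a\geq g+1$, $b\geq g+1$, $a+b=n-k$. Let $H_1$ be a connected $g$-regular graph of order $a$, and $H_2$ a connected graph of order $b$ in which one vertex has degree exactly $g+1$ and every other vertex has degree exactly $g$. Let $K_{1,k-1}$ be a star with center $v$, and let $H^k_n$ be a graph obtained from the disjoint union of $H_1$, $H_2$ and $K_{1,k-1}$ by adding exactly one edge from $v$ to $H_1$ and exactly one edge from $v$ to $H_2$. Then $\kappa^g(H^k_n)=k$.
   Context: For a connected graph $G=(V,E)$ and integer $g\ge0$: a set $F\subseteq V$ is a $g$-good-neighbor faulty set if $|N(v)\cap (V-F)|\geq g$ for every $v\in V-F$; a $g$-good-neighbor cut is such an $F$ with $G-F$ disconnected; $\kappa^g(G)$ is the minimum cardinality of a $g$-good-neighbor cut. *)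

From mathcomp Require Import all_boot.
Set Implicit Arguments. Unset Strict Implicit. Unset Printing Implicit Defensive.

Section Graphs.
Variable T : finType.
Implicit Types (e : rel T) (F X : {set T}).

Definition simple_graph e := symmetric e /\ irreflexive e.

Definition nbhd e (v : T) : {set T} := [set u | e v u].

Definition induced e X : rel T := [rel x y | [&& e x y, x \in X & y \in X]].

Definition connected_on e X := forall x y, x \in X -> y \in X -> connect (induced e X) x y.

Definition deg_in e X (x : T) := #|nbhd e x :&: X|.

Definition good_neighbor_faulty e (g : nat) F :=
  forall v, v \in ~: F -> g <= #|nbhd e v :&: ~: F|.

Definition disconnected_after e F :=
  exists x y, [/\ x \in ~: F, y \in ~: F & ~~ connect (induced e (~: F)) x y].

Definition good_neighbor_cut e (g : nat) F :=
  good_neighbor_faulty e g F /\ disconnected_after e F.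

Definition kappa_g_eq e (g m : nat) :=
  (exists F, good_neighbor_cut e g F /\ #|F| = m) /\
  (forall F, good_neighbor_cut e g F -> m <= #|F|).

End Graphs.

(* S is a g-good-neighbor cut: every vertex of H1 or H2 keeps at least g
   neighbours inside its own part, and no edge joins H1 to H2.  Conversely a
   leaf of the star has degree at most 1 < g, so every g-good-neighbor cut F
   contains the k - 1 leaves.  F cannot consist of the leaves alone, since
   then v survives and joins the connected graphs H1 and H2; hence |F| >= k.
   The arithmetic hypotheses only guarantee that H1 and H2 exist: the
   argument uses nothing but g >= 2 and A, B nonempty. *)
From mathcomp Require Import all_boot.

Set Implicit Arguments.
Unset Strict Implicit.
Unset Printing Implicit Defensive.

Lemma card_le_superset_setD1 (T : finType) (S F : {set T}) (v : T) :
  v \in S -> S :\ v \subset F -> F != S :\ v -> #|S| <= #|F|.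
Proof.
move=> vS sSF neF; rewrite (cardsD1 v S) vS add1n.
by apply: proper_card; rewrite properEneq eq_sym neF.
Qed.

Section InducedSubgraphs.
Variables (T : finType) (e : rel T).
Implicit Types (F X Y : {set T}).

Lemma deg_in_subset X Y x : X \subset Y -> deg_in e X x <= deg_in e Y x.
Proof. by move=> sXY; apply/subset_leq_card/setIS. Qed.

Lemma low_degree_in_faulty g F s :
  good_neighbor_faulty e g F -> #|nbhd e s| < g -> s \in F.
Proof.
move=> gF deg_s; apply/contraT => sF.
have := gF s; rewrite inE => /(_ sF) /leq_trans /(_ (subset_leq_card (subsetIl _ _))).
by rewrite leqNgt deg_s.
Qed.

Lemma connect_induced_subset X Y x y :
  X \subset Y -> connect (induced e X) x y -> connect (induced e Y) x y.
Proof.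
move=> sXY; apply: connect_sub => p q /and3P[epq pX qX].
by apply: connect1; rewrite /induced /= epq !(subsetP sXY).
Qed.

Hypothesis esym : symmetric e.

Lemma connect_sym_induced X : connect_sym (induced e X).
Proof.
apply: sym_connect_sym => p q; rewrite /induced /= esym.
by case: (p \in X); case: (q \in X); rewrite ?andbF.
Qed.

Lemma closed_not_connect X Y x y :
  (forall p q, p \in X -> q \in Y -> e p q -> q \in X) ->
  x \in X -> y \notin X -> ~~ connect (induced e Y) x y.
Proof.
move=> closedX xX yX; apply/negP => cxy.
have: closed (induced e Y) (mem X).
  apply: (intro_closed (connect_sym_induced Y)) => p q /and3P[epq _ qY] pX.
  exact: closedX pX qY epq.
by move/closed_connect/(_ x y cxy); rewrite xX (negbTE yX).
Qed.

Lemma connected_on_hub X Y v p :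
  connected_on e X -> X \subset Y -> v \in Y -> p \in X -> e v p ->
  forall z, z \in X -> connect (induced e Y) z v.
Proof.
move=> conX sXY vY pX evp z zX.
apply: connect_trans (connect_induced_subset sXY (conX z p zX pX)) _.
by apply: connect1; rewrite /induced /= esym evp (subsetP sXY).
Qed.

Lemma hub_not_disconnected F v :
  (forall z, z \in ~: F -> connect (induced e (~: F)) z v) ->
  ~ disconnected_after e F.
Proof.
move=> hub [x [y [xF yF /negP[]]]].
by rewrite (same_connect (connect_sym_induced _) (hub x xF)) connect_sym_induced hub.
Qed.

End InducedSubgraphs.

Section StarJoin.
Variables (T : finType) (e : rel T) (A B S : {set T}) (v : T).
Hypotheses (esym : symmetric e)
  (dAB : [disjoint A & B]) (dAS : [disjoint A & S]) (dBS : [disjoint B & S])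
  (cover : A :|: B :|: S = [set: T]).

Lemma notin_star x : x \notin S -> x \in A :|: B.
Proof.
move=> xS; have: x \in A :|: B :|: S by rewrite cover inE.
by rewrite inE (negbTE xS) orbF.
Qed.

Lemma parts_subset_setC : (A \subset ~: S) /\ (B \subset ~: S).
Proof. by rewrite -!disjoints_subset. Qed.

Lemma leaf_nbhd s :
  (forall s t, s \in S -> t \in S -> s != v -> t != v -> ~~ e s t) ->
  (forall s x, s \in S -> s != v -> x \in A :|: B -> ~~ e s x) ->
  s \in S -> s != v -> nbhd e s \subset [set v].
Proof.
move=> starN noSx sS sv; apply/subsetP => u; rewrite !inE => esu.
apply/contraT => uv; case: (boolP (u \in S)) => uS.
  by rewrite (negbTE (starN s u sS uS sv uv)) in esu.
by rewrite (negbTE (noSx s u sS sv (notin_star uS))) in esu.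
Qed.

Lemma star_faulty g :
  (forall x, x \in A -> g <= deg_in e A x) ->
  (forall x, x \in B -> g <= deg_in e B x) ->
  good_neighbor_faulty e g S.
Proof.
move=> degA degB x; rewrite inE => /notin_star; case: parts_subset_setC => sA sB.
case/setUP => [xA | xB].
  by apply: leq_trans (degA x xA) _; apply: deg_in_subset.
by apply: leq_trans (degB x xB) _; apply: deg_in_subset.
Qed.

Lemma star_disconnected x y :
  (forall x y, x \in A -> y \in B -> ~~ e x y) ->
  x \in A -> y \in B -> disconnected_after e S.
Proof.
move=> noAB xA yB; case: parts_subset_setC => sA sB.
exists x, y; split; [exact: (subsetP sA) | exact: (subsetP sB) |].
apply: (@closed_not_connect T e esym A) => //; last by rewrite (disjointFl dAB yB).
move=> p q pA; rewrite inE => /notin_star /setUP[// | qB] epq.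
by rewrite (negbTE (noAB p q pA qB)) in epq.
Qed.

Lemma leaves_not_disconnected :
  connected_on e A -> connected_on e B ->
  #|nbhd e v :&: A| = 1 -> #|nbhd e v :&: B| = 1 ->
  ~ disconnected_after e (S :\ v).
Proof.
move=> conA conB vA vB; case: parts_subset_setC => sA sB.
have vY : v \in ~: (S :\ v) by rewrite !inE eqxx.
have sub_setC (X : {set T}) : X \subset ~: S -> X \subset ~: (S :\ v).
  by move=> sX; apply: (subset_trans sX); rewrite setCS subD1set.
have hub (X : {set T}) :
    connected_on e X -> #|nbhd e v :&: X| = 1 -> X \subset ~: S ->
    forall z, z \in X -> connect (induced e (~: (S :\ v))) z v.
  move=> conX /eqP/cards1P[p hp] sX; have: p \in nbhd e v :&: X by rewrite hp set11.
  by rewrite !inE => /andP[evp pX]; apply: connected_on_hub (sub_setC X sX) _ pX _.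
apply: hub_not_disconnected => // z; rewrite !inE negb_and negbK => /orP[/eqP -> //|zS].
case/setUP: (notin_star zS) => [zA | zB]; first exact: hub conA vA sA _ zA.
exact: hub conB vB sB _ zB.
Qed.

End StarJoin.

Theorem lemma4p2 (n g k a b : nat) (T : finType) (e : rel T)
    (A B S : {set T}) (v : T) :
  1 <= k ->
  2 <= g -> g <= (n - k - 2)./2 ->
  odd ((n - k) * g) ->
  ~~ odd a -> odd b -> g + 1 <= a -> g + 1 <= b -> a + b = n - k ->
  simple_graph e ->
  (* vertex set is the disjoint union of V(H1) = A, V(H2) = B, V(K_{1,k-1}) = S *)
  [disjoint A & B] -> [disjoint A & S] -> [disjoint B & S] ->
  A :|: B :|: S = [set: T] ->
  #|A| = a -> #|B| = b -> #|S| = k ->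
  (* H1 : connected g-regular *)
  connected_on e A -> (forall x, x \in A -> deg_in e A x = g) ->
  (* H2 : connected, one vertex of degree g+1, all others of degree g *)
  connected_on e B ->
  (exists2 w, w \in B & deg_in e B w = g + 1 /\
     forall y, y \in B -> y != w -> deg_in e B y = g) ->
  (* K_{1,k-1} : star with centre v on S *)
  v \in S ->
  (forall s, s \in S -> s != v -> e v s) ->
  (forall s t, s \in S -> t \in S -> s != v -> t != v -> ~~ e s t) ->
  (* added edges: exactly one from v to H1, exactly one from v to H2, nothing else *)
  #|nbhd e v :&: A| = 1 -> #|nbhd e v :&: B| = 1 ->
  (forall x y, x \in A -> y \in B -> ~~ e x y) ->
  (forall s x, s \in S -> s != v -> x \in A :|: B -> ~~ e s x) ->
  kappa_g_eq e g k.
Proof.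
move=> _ g2 _ _ _ _ ga gb _ [esym _] dAB dAS dBS cover cA cB cS conA degA conB
  [w wB [degw degB]] vS _ starN vA vB noAB noSx.
have /card_gt0P[x xA] : 0 < #|A| by rewrite cA (leq_trans _ ga) ?addn1.
have /card_gt0P[y yB] : 0 < #|B| by rewrite cB (leq_trans _ gb) ?addn1.
have degA' z : z \in A -> g <= deg_in e A z by move/degA ->.
have degB' z : z \in B -> g <= deg_in e B z.
  by move=> zB; case: (eqVneq z w) => [-> | zw]; rewrite ?degw ?leq_addr ?degB.
split.
  exists S; split=> //; split; first exact (star_faulty dAS dBS cover degA' degB').
  exact (star_disconnected esym dAB dAS dBS cover noAB xA yB).
move=> F [gF discF]; rewrite -cS; apply: card_le_superset_setD1 vS _ _.
  apply/subsetP => s /setD1P[sv sS]; apply: low_degree_in_faulty gF _.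
  rewrite (leq_ltn_trans (subset_leq_card (leaf_nbhd cover starN noSx sS sv))) //.
  by rewrite cards1.
apply/eqP => eF; move: discF; rewrite eF.
exact: leaves_not_disconnected esym dAS dBS cover conA conB vA vB.
Qed.
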